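(* There is a constant $C>0$ such that for any distinct integers $n_1,n_2$ there exists an integer $n_3$ with $n_3\bmod\tau\in(n_1\bmod\tau,\,n_2\bmod\tau)$ and $|n_3|<C\max(|n_1|,|n_2|)$.
   Context: $\tau=\frac{1+\sqrt5}{2}$. For real $x$, $x\bmod\tau$ is its image in $\mathbb{R}/\tau\mathbb{Z}$; for $a,b$ in this circle, $(a,b)$ is the open arc from $a$ to $b$ in the positive direction. The constant $C$ is independent of all variables. *)

From Stdlib Require Import Reals ZArith.
Open Scope R_scope.

Definition tau : R := (1 + sqrt 5) / 2.

(* Canonical representative in [0, tau) of the class of x in R / tau Z.
   Int_part y = floor y. *)
Definition rmod_tau (x : R) : R := x - tau * IZR (Int_part (x / tau)).

(* x mod tau lies in the open positively oriented arc from (a mod tau)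
   to (b mod tau) on the circle R / tau Z: the positive displacement from a
   to x is strictly between 0 and the positive displacement from a to b. *)
Definition in_open_arc (x a b : R) : Prop :=
  0 < rmod_tau (x - a) /\ rmod_tau (x - a) < rmod_tau (b - a).

(* Write L for the representative of (n2 - n1) mod tau and d := n2 - n1 = L + m tau.
   The algebraic norm of L = d - m tau in Z[tau] is a nonzero integer, and its conjugate
   is O(|d|), so L >= c / |d|.  The units (2 - tau)^k = p - q tau of Z[tau] have norm 1,
   so they satisfy p (2 - tau)^k <= 1; the first one below L is p - q tau with
   p = O(1 / L) = O(|d|).  Then n3 := n1 + p lands in the arc, since
   (n3 - n1) mod tau = p - q tau lies in (0, L). *)
From Stdlib Require Import Reals ZArith Lra Lia Psatz.
Open Scope R_scope.

Lemma tau_sq : tau * tau = tau + 1.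
Proof.
  assert (H5 : sqrt 5 * sqrt 5 = 5) by (apply sqrt_sqrt; lra).
  unfold tau; nra.
Qed.

Lemma tau_bounds : 1.6 < tau < 1.62.
Proof.
  assert (H5 : sqrt 5 * sqrt 5 = 5) by (apply sqrt_sqrt; lra).
  pose proof (sqrt_pos 5).
  unfold tau; split; nra.
Qed.

Lemma rmod_tau_range x : 0 <= rmod_tau x < tau.
Proof.
  destruct tau_bounds as [T1 T2].
  destruct (base_Int_part (x / tau)) as [B1 B2].
  unfold rmod_tau.
  set (y := x / tau) in *.
  replace x with (tau * y) by (unfold y; field; lra).
  split; nra.
Qed.

Lemma rmod_tau_eq x (m : Z) : 0 <= x - tau * IZR m < tau -> rmod_tau x = x - tau * IZR m.
Proof.
  intros [H1 H2]. destruct tau_bounds as [T1 T2].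
  assert (A1 : IZR m <= x / tau).
  { apply (Rmult_le_reg_r tau); [lra|]. unfold Rdiv. rewrite Rmult_assoc, Rinv_l by lra. lra. }
  assert (A2 : x / tau < IZR m + 1).
  { apply (Rmult_lt_reg_r tau); [lra|]. unfold Rdiv. rewrite Rmult_assoc, Rinv_l by lra. lra. }
  destruct (base_Int_part (x / tau)) as [B1 B2].
  unfold rmod_tau. set (k := Int_part (x / tau)) in *.
  assert (k < m + 1)%Z by (apply lt_IZR; rewrite plus_IZR; simpl; lra).
  assert (m < k + 1)%Z by (apply lt_IZR; rewrite plus_IZR; simpl; lra).
  replace k with m by lia. reflexivity.
Qed.

(* The conjugate of a - b tau is a - b (1 - tau). *)
Lemma tau_norm (a b : Z) :
  (IZR a - IZR b * tau) * (IZR a - IZR b + IZR b * tau) = IZR (a * a - a * b - b * b).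
Proof.
  rewrite !minus_IZR, !mult_IZR.
  transitivity (IZR a * IZR a - IZR a * IZR b - IZR b * IZR b
                - IZR b * IZR b * (tau * tau - tau - 1)); [ring|].
  rewrite tau_sq; ring.
Qed.

Lemma golden_norm_eq0 (x y : Z) : (x * x - x * y - y * y = 0)%Z -> x = 0%Z /\ y = 0%Z.
Proof.
  enough (H : forall n x y, (Z.abs x + Z.abs y <= Z.of_nat n)%Z ->
                (x * x - x * y - y * y = 0)%Z -> x = 0%Z /\ y = 0%Z)
    by (apply (H (Z.abs_nat x + Z.abs_nat y)%nat); lia).
  (* If x or y is odd then so is x^2 - xy - y^2; otherwise halve both. *)
  induction n as [|n IH]; intros a b Hab Hnorm; [lia|].
  destruct (Z.Even_or_Odd a) as [[a' ->]|[a' ->]];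
  destruct (Z.Even_or_Odd b) as [[b' ->]|[b' ->]];
    try (exfalso; ring_simplify in Hnorm; lia).
  destruct (Z.eq_dec a' 0), (Z.eq_dec b' 0); try lia;
    destruct (IH a' b'); lia.
Qed.

Lemma rmod_tau_Z_lower_bound (d : Z) : d <> 0%Z -> 1 <= rmod_tau (IZR d) * (6 * Rabs (IZR d)).
Proof.
  intros Hd. destruct tau_bounds as [T1 T2].
  destruct (rmod_tau_range (IZR d)) as [L0 L1].
  set (m := Int_part (IZR d / tau)).
  assert (LE : rmod_tau (IZR d) = IZR d - IZR m * tau) by (unfold rmod_tau; fold m; ring).
  set (L := rmod_tau (IZR d)) in *.
  set (X := IZR d - IZR m + IZR m * tau).
  assert (LX : L * X = IZR (d * d - d * m - m * m)) by (rewrite LE; apply tau_norm).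
  assert (N1 : 1 <= Rabs (L * X)).
  { rewrite LX, <- abs_IZR. apply IZR_le.
    assert ((d * d - d * m - m * m)%Z <> 0%Z) by (intros H; apply golden_norm_eq0 in H; lia).
    lia. }
  assert (D1 : 1 <= Rabs (IZR d)) by (rewrite <- abs_IZR; apply IZR_le; lia).
  assert (XE : X = 2 * IZR d - L - IZR m) by (unfold X; lra).
  assert (Dabs : - Rabs (IZR d) <= IZR d <= Rabs (IZR d)).
  { pose proof (Rle_abs (IZR d)). pose proof (Rle_abs (- IZR d)). rewrite Rabs_Ropp in *. lra. }
  assert (Mabs : - Rabs (IZR d) - 1 <= IZR m <= Rabs (IZR d) + 1) by (split; nra).
  assert (XB : Rabs X <= 6 * Rabs (IZR d)) by (rewrite XE; apply Rabs_le; lra).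
  rewrite Rabs_mult, (Rabs_right L) in N1 by lra.
  nra.
Qed.

Lemma golden_unit_coords (n : nat) :
  exists p q : Z, (1 <= p)%Z /\ (0 <= q)%Z /\ (p * p - p * q - q * q = 1)%Z /\
    IZR p - IZR q * tau = (2 - tau) ^ n.
Proof.
  induction n as [|n (p & q & Hp & Hq & Hnorm & Hval)].
  - exists 1%Z, 0%Z. repeat split; try lia. simpl; ring.
  - exists (2 * p + q)%Z, (p + q)%Z. repeat split; try lia.
    rewrite <- tech_pow_Rmult, <- Hval, !plus_IZR, !mult_IZR.
    simpl. transitivity (2 * IZR p + IZR q - (IZR p + IZR q) * tau
                         + IZR q * (tau * tau - tau - 1)).
    + rewrite tau_sq; ring.
    + ring.
Qed.

Lemma golden_unit_mul_le1 (p q : Z) :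
  (0 <= q)%Z -> (p * p - p * q - q * q = 1)%Z -> 0 < IZR p - IZR q * tau ->
  IZR p * (IZR p - IZR q * tau) <= 1.
Proof.
  intros Hq Hnorm Hpos. destruct tau_bounds.
  pose proof (tau_norm p q) as N. rewrite Hnorm in N.
  apply IZR_le in Hq.
  assert (0 <= IZR q * (tau - 1)) by nra.
  simpl in N. nra.
Qed.

Lemma small_golden_element (L : R) : 0 < L < tau ->
  exists p q : Z, (1 <= p)%Z /\ 0 < IZR p - IZR q * tau < L /\ IZR p * L <= tau + 1.
Proof.
  intros [L0 L1]. destruct tau_bounds as [T1 T2].
  assert (Hinv : (2 - tau) * (tau + 1) = 1) by (pose proof tau_sq; nra).
  destruct (pow_lt_1_zero (2 - tau)) with (y := L) as [N HN];
    [rewrite Rabs_right; lra | exact L0 |].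
  specialize (HN N (Nat.le_refl N)). rewrite Rabs_right in HN by (apply Rle_ge, pow_le; lra).
  revert HN. induction N as [|n IH]; intros HN.
  - exists 1%Z, 0%Z. simpl. repeat split; try lia; lra.
  - destruct (Rlt_or_le ((2 - tau) ^ n) L) as [Hlt|Hge]; [exact (IH Hlt)|].
    destruct (golden_unit_coords (S n)) as (p & q & Hp & Hq & Hnorm & Hval).
    assert (Hpow : 0 < (2 - tau) ^ S n) by (apply pow_lt; lra).
    exists p, q. rewrite Hval. repeat split; auto.
    pose proof (golden_unit_mul_le1 p q Hq Hnorm ltac:(lra)) as Hle.
    rewrite Hval, <- tech_pow_Rmult in Hle.
    apply IZR_le in Hp.
    assert (HpL : IZR p * (2 - tau) * L <= 1).
    { assert (0 <= IZR p * (2 - tau)) by nra. nra. }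
    assert (E : IZR p * L = IZR p * (2 - tau) * L * (tau + 1)).
    { transitivity (IZR p * L * ((2 - tau) * (tau + 1))); [rewrite Hinv|]; ring. }
    rewrite E. nra.
Qed.

Theorem lemma15 :
  exists C : R, 0 < C /\
    forall n1 n2 : Z, n1 <> n2 ->
      exists n3 : Z,
        in_open_arc (IZR n3) (IZR n1) (IZR n2) /\
        Rabs (IZR n3) < C * Rmax (Rabs (IZR n1)) (Rabs (IZR n2)).
Proof.
  exists 40. split; [lra|]. intros n1 n2 Hne.
  destruct tau_bounds as [T1 T2].
  set (M := Rmax (Rabs (IZR n1)) (Rabs (IZR n2))).
  assert (M1 : Rabs (IZR n1) <= M) by apply Rmax_l.
  assert (M2 : Rabs (IZR n2) <= M) by apply Rmax_r.
  set (d := (n2 - n1)%Z).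
  assert (Hd : IZR n2 - IZR n1 = IZR d) by (unfold d; rewrite minus_IZR; ring).
  assert (DM : Rabs (IZR d) <= 2 * M).
  { rewrite <- Hd. unfold Rminus. eapply Rle_trans; [apply Rabs_triang|].
    rewrite Rabs_Ropp. lra. }
  assert (LB := rmod_tau_Z_lower_bound d ltac:(unfold d; lia)).
  destruct (rmod_tau_range (IZR d)) as [L0 L1].
  set (L := rmod_tau (IZR d)) in *.
  pose proof (Rabs_pos (IZR d)).
  assert (Lpos : 0 < L) by nra.
  destruct (small_golden_element L (conj Lpos L1)) as (p & q & Hp & [Q0 QL] & PL).
  apply IZR_le in Hp.
  exists (n1 + p)%Z. split.
  - unfold in_open_arc.
    replace (IZR (n1 + p) - IZR n1) with (IZR p) by (rewrite plus_IZR; ring).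
    rewrite Hd, (rmod_tau_eq (IZR p) q) by lra. fold L. lra.
  - rewrite plus_IZR. eapply Rle_lt_trans; [apply Rabs_triang|].
    rewrite (Rabs_right (IZR p)) by lra.
    assert (IZR p <= 12 * (tau + 1) * M) by nra.
    nra.
Qed.
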